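(* For every positive integer $n$ there exists a functor $\mathbf{GL}_n$ from the category of partial rings to the category of partial groups which is representable (there is a partial ring $G$ such that, for every partial ring $A$, the underlying set of $\mathbf{GL}_n(A)$ is in bijection with $\mathrm{Hom}_{\mathrm{pring}}(G,A)$, naturally in $A$), and which has the following properties: (1) if $A$ is a good partial ring, then $\mathbf{GL}_n(A)$ is a group, i.e. the restriction of $\mathbf{GL}_n$ to good partial rings factors through the category of groups; (2) if $A$ is a commutative ring with $1$, then $\mathbf{GL}_n(A)$ is the general linear group of invertible $n\times n$ matrices with entries in $A$; (3) $\mathbf{GL}_n(\mathbb{F}_1)$ is the $n$-th symmetric group $\mathfrak{S}_n$.
   Context: A partial magma is a set $A$ with a distinguished element $0$, a subset $A_2\subseteq A\times A$ of ''summable pairs'' and a map $+\colon A_2\to A$, such that $(0,a),(a,0)\in A_2$ and $a+0=0+a=a$ for all $a$, and $(a,b)\in A_2$ implies $(b,a)\in A_2$ and $a+b=b+a$. It is a partial monoid if moreover, for all $a,b,c$: $(a,b)\in A_2$ and $(a+b,c)\in A_2$ hold if and only if $(b,c)\in A_2$ and $(a,b+c)\in A_2$ hold, and then $(a+b)+c=a+(b+c)$. A partial ring is a partial monoid $A$ with a commutative, associative multiplication with unit $1$ such that $0\cdot a=0$ for all $a$, and $(a_1,a_2)\in A_2$ implies $(a_1x,a_2x)\in A_2$ and $(a_1+a_2)x=a_1x+a_2x$ for all $x$. A homomorphism of partial rings is a map $f$ with $f(0)=0$, $f(1)=1$, $f(ab)=f(a)f(b)$, and $(a_1,a_2)\in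 A_2\Rightarrow (f(a_1),f(a_2))\in B_2$ and $f(a_1+a_2)=f(a_1)+f(a_2)$. A commutative ring with $1$ is regarded as a partial ring in which all pairs are summable. $\mathbb{F}_1$ denotes the partial ring $\{0,1\}$ with the usual multiplication in which $1+1$ is undefined. For a partial monoid $A$, an $r$-tuple $(a_1,\dots,a_r)$ is summable, written $(a_1,\dots,a_r)\in A_r$, if the sum $a_1+\dots+a_r$ can be calculated in $A$. Put $A_{(n)}=\{(c_1,\dots,c_n)\in A^n : (a_1c_1,\dots,a_nc_n)\in A_n \text{ for all } a_1,\dots,a_n\in A\}$. A partial ring $A$ is good if $A_n=A_{(n)}$. A partial group is a set $G$ with a unit element $1$, a subset $G_2\subseteq G\times G$ and a (not necessarily commutative or associative) product $G_2\to G$, such that $(1,a),(a,1)\in G_2$ with $1a=a1=a$ for all $a$, and for every $a\in G$ there is $b\in G$ with $(a,b),(b,a)\in G_2$ and $ab=ba=1$. A morphism of partial groups is a map preserving $1$, sending $G_2$ into $H_2$ and preserving products. *)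

From mathcomp Require Import all_boot all_order all_algebra all_fingroup.
Set Implicit Arguments. Unset Strict Implicit. Unset Printing Implicit Defensive.
Import GRing.Theory.

(* Partial rings.  The partial addition  + : A_2 -> A  is encoded as a *)
(* function  pr_add : A -> A -> option A  with                          *)
(*   (a,b) \in A_2  <->  pr_add a b <> None,   and then a+b = the value.*)
Record PRing := PRingPack {
  pr_car :> Type;
  pr_zero : pr_car;
  pr_one : pr_car;
  pr_add : pr_car -> pr_car -> option pr_car;
  pr_mul : pr_car -> pr_car -> pr_car;
  pr_add0a : forall a, pr_add pr_zero a = Some a;
  pr_adda0 : forall a, pr_add a pr_zero = Some a;
  pr_addC : forall a b, pr_add a b = pr_add b a;
  (* partial monoid: ((a,b) in A_2 /\ (a+b,c) in A_2) <-> ((b,c) in A_2 /\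
     (a,b+c) in A_2), and then (a+b)+c = a+(b+c) *)
  pr_addA : forall a b c,
    obind (fun ab => pr_add ab c) (pr_add a b)
    = obind (fun bc => pr_add a bc) (pr_add b c);
  pr_mulC : forall a b, pr_mul a b = pr_mul b a;
  pr_mulA : forall a b c, pr_mul a (pr_mul b c) = pr_mul (pr_mul a b) c;
  pr_mul1a : forall a, pr_mul pr_one a = a;
  pr_mul0a : forall a, pr_mul pr_zero a = pr_zero;
  pr_mulDl : forall a1 a2 s x, pr_add a1 a2 = Some s ->
    pr_add (pr_mul a1 x) (pr_mul a2 x) = Some (pr_mul s x)
}.

Record phom (A B : PRing) := PHom {
  phom_fun :> A -> B;
  phom0 : phom_fun (pr_zero A) = pr_zero B;
  phom1 : phom_fun (pr_one A) = pr_one B;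
  phomM : forall a b, phom_fun (pr_mul a b) = pr_mul (phom_fun a) (phom_fun b);
  phomD : forall a1 a2 s, pr_add a1 a2 = Some s ->
    pr_add (phom_fun a1) (phom_fun a2) = Some (phom_fun s)
}.

Definition phom_id (A : PRing) : phom A A.
Proof. by apply: (@PHom A A id). Defined.

Definition phom_comp (A B C : PRing) (g : phom B C) (f : phom A B) : phom A C.
Proof.
apply: (@PHom A C (fun x => g (f x))).
- by rewrite !phom0.
- by rewrite !phom1.
- by move=> a b; rewrite !phomM.
- by move=> a1 a2 s h; do 2 apply: phomD.
Defined.

(* Summability of finite tuples:  (a_1,...,a_r) \in A_r  iff the sum
   a_1 + (a_2 + (... + (a_r + 0))) can be computed. *)
Fixpoint psum (A : PRing) (s : seq A) : option A :=
  match s with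
  | [::] => Some (pr_zero A)
  | a :: s' => obind (pr_add a) (psum s')
  end.

Definition psummable (A : PRing) (s : seq A) : Prop := exists v, psum s = Some v.

Definition in_Aparen (A : PRing) (c : seq A) : Prop :=
  forall a : seq A, size a = size c ->
    psummable [seq pr_mul p.1 p.2 | p <- zip a c].

Definition good (A : PRing) : Prop :=
  forall c : seq A, psummable c <-> in_Aparen c.

(* Partial groups, same option encoding of the partial product.        *)
Record PGroup := PGroupPack {
  pg_car :> Type;
  pg_one : pg_car;
  pg_mul : pg_car -> pg_car -> option pg_car;
  pg_mul1a : forall a, pg_mul pg_one a = Some a;
  pg_mula1 : forall a, pg_mul a pg_one = Some a;
  pg_inv : forall a, exists b, pg_mul a b = Some pg_one /\ pg_mul b a = Some pg_one
}.

Record pgmor (G H : PGroup) := PGMor {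
  pgmor_fun :> G -> H;
  pgmor1 : pgmor_fun (pg_one G) = pg_one H;
  pgmorM : forall a b c, pg_mul a b = Some c ->
    pg_mul (pgmor_fun a) (pgmor_fun b) = Some (pgmor_fun c)
}.

Definition is_group (G : PGroup) : Prop :=
  (forall a b : G, exists c, pg_mul a b = Some c) /\
  (forall a b c : G,
     obind (fun ab => pg_mul ab c) (pg_mul a b)
     = obind (fun bc => pg_mul a bc) (pg_mul b c)).

Record PFunctor := PFunctorPack {
  F_obj :> PRing -> PGroup;
  F_map : forall A B : PRing, phom A B -> pgmor (F_obj A) (F_obj B);
  F_id : forall (A : PRing) (x : F_obj A), F_map (phom_id A) x = x;
  F_comp : forall (A B C : PRing) (g : phom B C) (f : phom A B) (x : F_obj A),
    F_map (phom_comp g f) x = F_map g (F_map f x)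
}.

Definition representable (F : PFunctor) : Prop :=
  exists (G : PRing) (eta : forall A : PRing, F A -> phom G A),
    (forall A : PRing, bijective (eta A)) /\
    (forall (A B : PRing) (f : phom A B) (x : F A) (g : G),
        eta B (@F_map F A B f x) g = f (eta A x g)).

Section ComRingPRing.
Variable R : comPzRingType.

Definition cr_add (a b : R) : option R := Some (a + b)%R.

Lemma cr_add0a (a : R) : cr_add 0%R a = Some a.
Proof. by rewrite /cr_add add0r. Qed.
Lemma cr_adda0 (a : R) : cr_add a 0%R = Some a.
Proof. by rewrite /cr_add addr0. Qed.
Lemma cr_addC (a b : R) : cr_add a b = cr_add b a.
Proof. by rewrite /cr_add addrC. Qed.
Lemma cr_addA (a b c : R) :
  obind (fun ab => cr_add ab c) (cr_add a b)
  = obind (fun bc => cr_add a bc) (cr_add b c).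
Proof. by rewrite /cr_add /= addrA. Qed.
Lemma cr_mulC (a b : R) : (a * b = b * a)%R.
Proof. exact: mulrC. Qed.
Lemma cr_mulA (a b c : R) : (a * (b * c) = a * b * c)%R.
Proof. exact: mulrA. Qed.
Lemma cr_mul1a (a : R) : (1 * a = a)%R.
Proof. exact: mul1r. Qed.
Lemma cr_mul0a (a : R) : (0 * a = 0)%R.
Proof. exact: mul0r. Qed.
Lemma cr_mulDl (a1 a2 s x : R) : cr_add a1 a2 = Some s ->
  cr_add (a1 * x)%R (a2 * x)%R = Some (s * x)%R.
Proof. by rewrite /cr_add => -[<-]; rewrite mulrDl. Qed.

Definition comring_pring : PRing :=
  @PRingPack R 0%R 1%R cr_add (fun a b => (a * b)%R)
    cr_add0a cr_adda0 cr_addC cr_addA cr_mulC cr_mulA cr_mul1a cr_mul0a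
    cr_mulDl.
End ComRingPRing.

Definition f1_add (a b : bool) : option bool :=
  if a && b then None else Some (a || b).

Lemma f1_add0a a : f1_add false a = Some a. Proof. by []. Qed.
Lemma f1_adda0 a : f1_add a false = Some a. Proof. by case: a. Qed.
Lemma f1_addC a b : f1_add a b = f1_add b a. Proof. by case: a; case: b. Qed.
Lemma f1_addA a b c :
  obind (fun ab => f1_add ab c) (f1_add a b)
  = obind (fun bc => f1_add a bc) (f1_add b c).
Proof. by case: a; case: b; case: c. Qed.
Lemma f1_mulC a b : a && b = b && a. Proof. exact: andbC. Qed.
Lemma f1_mulA a b c : a && (b && c) = (a && b) && c. Proof. exact: andbA. Qed.
Lemma f1_mul1a a : true && a = a. Proof. by []. Qed.
Lemma f1_mul0a a : false && a = false. Proof. by []. Qed.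
Lemma f1_mulDl a1 a2 s x : f1_add a1 a2 = Some s ->
  f1_add (a1 && x) (a2 && x) = Some (s && x).
Proof. by case: a1; case: a2; case: x => //= -[<-]. Qed.

Definition F1 : PRing :=
  @PRingPack bool false true f1_add andb
    f1_add0a f1_adda0 f1_addC f1_addA f1_mulC f1_mulA f1_mul1a f1_mul0a
    f1_mulDl.

Definition invertible_mx (R : comPzRingType) (n : nat) (M : 'M[R]_n) : Prop :=
  exists N : 'M[R]_n, (M *m N = 1%:M)%R /\ (N *m M = 1%:M)%R.

(* GL_n(A) is the set of pairs (X, Y) of n x n matrices over A, all of whose
   rows and columns are summable, with XY = YX = 1; the product of (X, Y) and
   (X', Y') is (XX', Y'Y) whenever these matrix products exist and again form
   such a pair.  An iterated partial sum can be computed in the other order as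
   soon as it exists (Fubini); this gives associativity of matrix products and,
   together with transposition, the inverse law; over a good partial ring
   every product exists, so GL_n(A) is a group.
   GL_n is represented by a "coordinate ring" OGL: terms in the entries of X
   and Y that are defined at every point of every GL_n(A), identified when they
   agree at every point.  A point x of GL_n(A) evaluates terms, giving a
   homomorphism OGL -> A, and every homomorphism is evaluation at the image of
   the generic point.
   Over a commutative ring all sums exist and GL_n(A) is the usual group of
   invertible matrices; over F_1 a sum exists only when at most one summand is
   1, which forces X and Y to be mutually inverse permutation matrices. *)

From mathcomp Require Import all_boot all_order all_algebra all_fingroup.
From HB Require Import structures.
From Stdlib Require Import ClassicalEpsilon ProofIrrelevance.
From Stdlib Require Import FunctionalExtensionality PropExtensionality.
Set Implicit Arguments. Unset Strict Implicit. Unset Printing Implicit Defensive.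
Local Open Scope ring_scope.

(** * Partial sums *)

Section OptionSum.
Variable A : PRing.

Definition oadd (x y : option A) : option A :=
  if x is Some a then (if y is Some b then pr_add a b else None) else None.

Lemma oaddA : associative oadd.
Proof.
move=> [a|] [b|] [c|] //=; last by case: (pr_add a b).
by have := pr_addA a b c; case: (pr_add a b) => [ab|]; case: (pr_add b c) => [bc|] //=.
Qed.

Lemma oaddC : commutative oadd.
Proof. by move=> [a|] [b|] //=; rewrite pr_addC. Qed.

Lemma add0o : left_id (Some (pr_zero A)) oadd.
Proof. by move=> [a|] //=; rewrite pr_add0a. Qed.

HB.instance Definition _ :=
  Monoid.isComLaw.Build (option A) (Some (pr_zero A)) oadd oaddA oaddC add0o.

Lemma psum_big (s : seq A) : psum s = \big[oadd/Some (pr_zero A)]_(a <- s) Some a.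
Proof.
elim: s => [|a s IH]; rewrite ?big_nil ?big_cons //= IH.
by case: (\big[_/_]_(_ <- s) _).
Qed.

Definition omul (u v : option A) : option A :=
  if u is Some a then (if v is Some b then Some (pr_mul a b) else None) else None.

Lemma omulC : commutative omul.
Proof. by move=> [a|] [b|] //=; rewrite pr_mulC. Qed.

Lemma omulA : associative omul.
Proof. by move=> [a|] [b|] [c|] //=; rewrite pr_mulA. Qed.

Lemma mul1o : left_id (Some (pr_one A)) omul.
Proof. by move=> [a|] //=; rewrite pr_mul1a. Qed.

End OptionSum.

Definition osum (A : PRing) (I : finType) (f : I -> A) : option A :=
  \big[@oadd A/Some (pr_zero A)]_(i : I) Some (f i).

Section OSumTheory.
Variable A : PRing.

Lemma big_oadd_Some (I : finType) (F : I -> option A) v :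
  \big[@oadd A/Some (pr_zero A)]_(i : I) F i = Some v -> forall i, F i <> None.
Proof. by move=> + i Fi; rewrite (bigD1 i) //= Fi. Qed.

Lemma osum_single (I : finType) (f : I -> A) i0 :
  (forall i, i != i0 -> f i = pr_zero A) -> osum f = Some (f i0).
Proof. by move=> f0; rewrite /osum (bigD1 i0) //= big1 /= ?pr_adda0 // => i /f0 ->. Qed.

Lemma osum_morph (B : PRing) (g : A -> B) (I : finType) (f : I -> A) v :
  g (pr_zero A) = pr_zero B ->
  (forall a b s, pr_add a b = Some s -> pr_add (g a) (g b) = Some (g s)) ->
  osum f = Some v -> osum (g \o f) = Some (g v).
Proof.
move=> g0 gD; rewrite /osum; elim: (index_enum I) v => [|i r IH] v.
  by rewrite !big_nil => -[<-]; rewrite g0.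
rewrite !big_cons; case E: (\big[_/_]_(_ <- r) _) => [w|] //= fiw.
by rewrite (IH w) //=; apply: gD.
Qed.

Lemma osum_hom (B : PRing) (h : phom A B) (I : finType) (f : I -> A) v :
  osum f = Some v -> osum (h \o f) = Some (h v).
Proof. exact/osum_morph/phomD/phom0. Qed.

Lemma osum_mulr (I : finType) (f : I -> A) v x :
  osum f = Some v -> osum (fun i => pr_mul (f i) x) = Some (pr_mul v x).
Proof.
exact: (osum_morph (g := fun a => pr_mul a x) (pr_mul0a x) (fun a b s => @pr_mulDl _ a b s x)).
Qed.

Lemma osum_mull (I : finType) (f : I -> A) v x :
  osum f = Some v -> osum (fun i => pr_mul x (f i)) = Some (pr_mul x v).
Proof.
move=> /(osum_mulr x); rewrite pr_mulC => <-.
by apply: eq_bigr => i _; rewrite pr_mulC.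
Qed.

Lemma osum_exchange (I J : finType) (t : I -> J -> A) (r : I -> A) v :
  (forall i, osum (t i) = Some (r i)) -> osum r = Some v ->
  exists2 c : J -> A, (forall j, osum (t^~ j) = Some (c j)) & osum c = Some v.
Proof.
move=> tr rv.
have tv : \big[@oadd A/Some (pr_zero A)]_(j : J) osum (t^~ j) = Some v.
  by rewrite /osum exchange_big -rv; apply: eq_bigr => i _; apply: tr.
have t_def := big_oadd_Some tv.
exists (fun j => odflt (pr_zero A) (osum (t^~ j))) => [j|].
  by case: (osum _) (t_def j).
by rewrite -tv; apply: eq_bigr => j _; case: (osum _) (t_def j).
Qed.

Lemma good_osum_mul (I : finType) (c a : I -> A) : good A ->
  osum c <> None -> osum (fun i => pr_mul (a i) (c i)) <> None.
Proof.
move=> goodA c_def.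
have c_sum : psummable [seq c i | i <- index_enum I].
  move: c_def; rewrite /psummable psum_big big_map /osum.
  by case: (\big[_/_]_(_ <- _) _) => [v|] // _; exists v.
have sizes : size [seq a i | i <- index_enum I] = size [seq c i | i <- index_enum I].
  by rewrite !size_map.
have [v] := proj1 (goodA _) c_sum _ sizes.
by rewrite zip_map -map_comp psum_big big_map /osum => ->.
Qed.

End OSumTheory.

(** * Matrices over a partial ring *)

Section PartialMatrix.
Variables (A : PRing) (n : nat).
Implicit Types X Y Z P Q R T U V W : 'M[A]_n.

Definition pmx1 : 'M[A]_n := \matrix_(i, j) if i == j then pr_one A else pr_zero A.

Lemma pmx1E i j : pmx1 i j = if i == j then pr_one A else pr_zero A.
Proof. exact: mxE. Qed.

Definition pmulmx X Y (i k : 'I_n) : option A := osum (fun j => pr_mul (X i j) (Y j k)).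

Definition is_mulmx X Y Z := forall i k, pmulmx X Y i k = Some (Z i k).

Definition rows_summable X := forall i, osum (X i) <> None.

Definition lines_summable X := rows_summable X /\ rows_summable X^T.

Definition gl_pair X Y :=
  [/\ is_mulmx X Y pmx1, is_mulmx Y X pmx1, lines_summable X & lines_summable Y].

Lemma is_mulmx_inj X Y Z Z' : is_mulmx X Y Z -> is_mulmx X Y Z' -> Z = Z'.
Proof. by move=> XYZ XYZ'; apply/matrixP => i k; have := XYZ i k; rewrite XYZ' => -[]. Qed.

Lemma pmulmx_tr X Y i k : pmulmx X Y i k = pmulmx Y^T X^T k i.
Proof. by apply: eq_bigr => j _; rewrite !mxE pr_mulC. Qed.

Lemma is_mulmx_tr X Y Z : is_mulmx X Y Z -> is_mulmx Y^T X^T Z^T.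
Proof. by move=> XYZ k i; rewrite -pmulmx_tr XYZ mxE. Qed.

Lemma pmx1_tr : pmx1^T = pmx1.
Proof. by apply/matrixP => i j; rewrite mxE !pmx1E eq_sym. Qed.

Lemma mul1pmx X : is_mulmx pmx1 X X.
Proof.
move=> i k; rewrite /pmulmx (osum_single (i0 := i)) /= ?pmx1E ?eqxx ?pr_mul1a // => j ji.
by rewrite pmx1E eq_sym (negbTE ji) pr_mul0a.
Qed.

Lemma mulpmx1 X : is_mulmx X pmx1 X.
Proof. by have := is_mulmx_tr (mul1pmx X^T); rewrite trmxK pmx1_tr. Qed.

Lemma is_mulmx_assoc P Q R U V W :
  is_mulmx P Q U -> is_mulmx Q R V -> is_mulmx P V W -> is_mulmx U R W.
Proof.
move=> PQU QRV PVW i l.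
have [c tc cW] := osum_exchange (t := fun j k => pr_mul (P i j) (pr_mul (Q j k) (R k l)))
  (fun j => osum_mull (P i j) (QRV j l)) (PVW i l).
rewrite -cW; apply: eq_bigr => k _.
rewrite -tc -(osum_mulr (R k l) (PQU i k)).
by apply: eq_bigr => j _; rewrite pr_mulA.
Qed.

Lemma is_mulmx_assoc_r P Q R U V W :
  is_mulmx P Q U -> is_mulmx Q R V -> is_mulmx U R W -> is_mulmx P V W.
Proof.
move=> /is_mulmx_tr PQU /is_mulmx_tr QRV /is_mulmx_tr URW.
by have := is_mulmx_tr (is_mulmx_assoc QRV PQU URW); rewrite !trmxK.
Qed.

Lemma is_mulmx_inv P Q R T U V : is_mulmx Q R pmx1 -> is_mulmx P T pmx1 ->
  is_mulmx P Q U -> is_mulmx R T V -> is_mulmx U V pmx1.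
Proof.
move=> QR1 PT1 PQU RTV.
exact: is_mulmx_assoc_r (is_mulmx_assoc PQU QR1 (mulpmx1 P)) RTV PT1.
Qed.

Lemma mulmx1_inj X Y Y' : is_mulmx Y X pmx1 -> is_mulmx X Y' pmx1 -> Y = Y'.
Proof.
move=> YX1 XY1; apply: is_mulmx_inj (mul1pmx Y').
exact: is_mulmx_assoc YX1 XY1 (mulpmx1 Y).
Qed.

Lemma rows_summable_pmx1 : rows_summable pmx1.
Proof.
move=> i; rewrite (osum_single (i0 := i)) // => j ji.
by rewrite pmx1E eq_sym (negbTE ji).
Qed.

Lemma gl_pair1 : gl_pair pmx1 pmx1.
Proof.
have pmx1_sum : lines_summable pmx1.
  by rewrite /lines_summable pmx1_tr; split; apply: rows_summable_pmx1.
by split => //; apply: mul1pmx.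
Qed.

Lemma gl_pair_sym X Y : gl_pair X Y -> gl_pair Y X.
Proof. by case. Qed.

Section Good.
Hypothesis goodA : good A.

Lemma pmulmx_defined X Y i k : rows_summable X -> pmulmx X Y i k <> None.
Proof.
move=> X_sum; have := good_osum_mul (a := fun j => Y j k) goodA (X_sum i).
suff -> : pmulmx X Y i k = osum (fun j => pr_mul (Y j k) (X i j)) by [].
by apply: eq_bigr => j _; rewrite pr_mulC.
Qed.

Lemma is_mulmx_exists X Y : rows_summable X -> exists Z, is_mulmx X Y Z.
Proof.
move=> X_sum; exists (\matrix_(i, k) odflt (pr_zero A) (pmulmx X Y i k)) => i k.
by rewrite mxE; case: (pmulmx X Y i k) (@pmulmx_defined X Y i k X_sum).
Qed.

Lemma rows_summable_mul P Q U :
  is_mulmx P Q U -> rows_summable P -> rows_summable Q -> rows_summable U.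
Proof.
move=> PQU P_sum Q_sum i.
pose q j := odflt (pr_zero A) (osum (Q j)).
have Qq j : osum (Q j) = Some (q j) by rewrite /q; case: (osum _) (Q_sum j).
have := good_osum_mul (a := q) goodA (P_sum i).
case E: osum => [v|] // _.
have Pq : osum (fun j => pr_mul (P i j) (q j)) = Some v.
  by rewrite -E; apply: eq_bigr => j _; rewrite pr_mulC.
have [c tc cv] := osum_exchange (fun j => osum_mull (P i j) (Qq j)) Pq.
suff -> : osum (U i) = osum c by rewrite cv.
by apply: eq_bigr => k _; have := PQU i k; rewrite /pmulmx tc => -[->].
Qed.

Lemma lines_summable_mul P Q U :
  is_mulmx P Q U -> lines_summable P -> lines_summable Q -> lines_summable U.
Proof.
move=> PQU [P_rows P_cols] [Q_rows Q_cols]; split.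
  exact: rows_summable_mul PQU P_rows Q_rows.
exact: rows_summable_mul (is_mulmx_tr PQU) Q_cols P_cols.
Qed.

Lemma gl_pair_mul X Y X' Y' Z W : gl_pair X Y -> gl_pair X' Y' ->
  is_mulmx X X' Z -> is_mulmx Y' Y W -> gl_pair Z W.
Proof.
move=> [XY1 YX1 X_sum Y_sum] [XY1' YX1' X_sum' Y_sum'] XXZ YYW; split.
- exact: is_mulmx_inv XY1' XY1 XXZ YYW.
- exact: is_mulmx_inv YX1 YX1' YYW XXZ.
- exact: lines_summable_mul XXZ X_sum X_sum'.
- exact: lines_summable_mul YYW Y_sum' Y_sum.
Qed.

End Good.
End PartialMatrix.

Section MapMatrix.
Variables (A B : PRing) (f : phom A B) (n : nat).
Implicit Types X Y Z : 'M[A]_n.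

Lemma pmx1_map : map_mx f (pmx1 A n) = pmx1 B n.
Proof. by apply/matrixP => i j; rewrite mxE !pmx1E; case: (i == j); rewrite ?phom0 ?phom1. Qed.

Lemma is_mulmx_map X Y Z : is_mulmx X Y Z -> is_mulmx (map_mx f X) (map_mx f Y) (map_mx f Z).
Proof.
move=> XYZ i k; rewrite mxE -(osum_hom f (XYZ i k)).
by apply: eq_bigr => j _; rewrite !mxE /= phomM.
Qed.

Lemma rows_summable_map X : rows_summable X -> rows_summable (map_mx f X).
Proof.
move=> X_sum i; case E: (osum (X i)) (X_sum i) => [v|] // _.
suff -> : osum (map_mx f X i) = osum (f \o X i) by rewrite (osum_hom f E).
by apply: eq_bigr => j _; rewrite mxE.
Qed.

Lemma gl_pair_map X Y : gl_pair X Y -> gl_pair (map_mx f X) (map_mx f Y).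
Proof.
have lines_map Z : lines_summable Z -> lines_summable (map_mx f Z).
  by case=> rows cols; split; rewrite ?map_trmx; apply: rows_summable_map.
case=> XY1 YX1 X_sum Y_sum; split; rewrite -?pmx1_map.
- exact: is_mulmx_map XY1.
- exact: is_mulmx_map YX1.
- exact: lines_map.
- exact: lines_map.
Qed.

End MapMatrix.

(** * The partial group GL_n(A) *)

Section GLn.
Variable n : nat.

Record glmat (A : PRing) := GLMat {
  glX : 'M[A]_n;
  glY : 'M[A]_n;
  glP : gl_pair glX glY
}.

Lemma glmat_eq (A : PRing) (x y : glmat A) : glX x = glX y -> glY x = glY y -> x = y.
Proof.
case: x y => X Y P [X' Y' P'] /= XX' YY'; subst X' Y'.
by rewrite (proof_irrelevance _ P P').
Qed.

Lemma glX_inj (A : PRing) : injective (@glX A).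
Proof.
move=> x y XY; apply: glmat_eq => //.
by case: (glP x) => _ YX1 _ _; case: (glP y) => XY1 _ _ _; apply: mulmx1_inj YX1 _; rewrite XY.
Qed.

Section PartialGroup.
Variable A : PRing.
Implicit Types x y z : glmat A.

Definition is_glprod x y z :=
  is_mulmx (glX x) (glX y) (glX z) /\ is_mulmx (glY y) (glY x) (glY z).

Lemma is_glprod_inj x y z z' : is_glprod x y z -> is_glprod x y z' -> z = z'.
Proof. by move=> [XZ YZ] [XZ' YZ']; apply: glmat_eq; apply: is_mulmx_inj. Qed.

Lemma is_glprod_assoc x y z xy yz xyz :
  is_glprod x y xy -> is_glprod y z yz -> is_glprod xy z xyz -> is_glprod x yz xyz.
Proof.
move=> [Xxy Yxy] [Xyz Yyz] [Xxyz Yxyz]; split.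
  exact: is_mulmx_assoc_r Xxy Xyz Xxyz.
exact: is_mulmx_assoc Yyz Yxy Yxyz.
Qed.

Definition glmul x y : option (glmat A) :=
  match excluded_middle_informative (exists z, is_glprod x y z) with
  | left ex => Some (proj1_sig (constructive_indefinite_description _ ex))
  | right _ => None
  end.

Lemma glmul_Some x y z : glmul x y = Some z <-> is_glprod x y z.
Proof.
rewrite /glmul; case: excluded_middle_informative => [ex|no_prod]; last first.
  by split=> // xyz; case: no_prod; exists z.
case: (constructive_indefinite_description _ ex) => z' xyz' /=.
by split=> [[<-] //|xyz]; rewrite (is_glprod_inj xyz xyz').
Qed.

Definition gl1 : glmat A := GLMat (gl_pair1 A n).

Definition glinv x : glmat A := GLMat (gl_pair_sym (glP x)).

Lemma glmul1x x : glmul gl1 x = Some x.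
Proof. by apply/glmul_Some; split; [apply: mul1pmx | apply: mulpmx1]. Qed.

Lemma glmulx1 x : glmul x gl1 = Some x.
Proof. by apply/glmul_Some; split; [apply: mulpmx1 | apply: mul1pmx]. Qed.

Lemma glmulV x : exists y, glmul x y = Some gl1 /\ glmul y x = Some gl1.
Proof. by exists (glinv x); case: (glP x) => XY1 YX1 _ _; split; apply/glmul_Some. Qed.

Definition GLpg : PGroup := PGroupPack glmul1x glmulx1 glmulV.

Lemma glmul_total x y : good A -> exists z, glmul x y = Some z.
Proof.
move=> goodA; have [_ _ [X_rows _] _] := glP x; have [_ _ _ [Y_rows _]] := glP y.
have [Z XXZ] := is_mulmx_exists goodA (glX y) X_rows.
have [W YYW] := is_mulmx_exists goodA (glY x) Y_rows.
exists (GLMat (gl_pair_mul goodA (glP x) (glP y) XXZ YYW)).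
by apply/glmul_Some.
Qed.

Lemma GLpg_group : good A -> is_group GLpg.
Proof.
move=> goodA; split=> [x y|x y z]; first exact: glmul_total.
have [xy /[dup] Exy /glmul_Some Pxy] := glmul_total x y goodA.
have [yz /[dup] Eyz /glmul_Some Pyz] := glmul_total y z goodA.
have [xyz /[dup] Exyz /glmul_Some Pxyz] := glmul_total xy z goodA.
rewrite /= Exy Eyz /= Exyz; apply/esym/glmul_Some.
exact: is_glprod_assoc Pxy Pyz Pxyz.
Qed.

End PartialGroup.

Section Functoriality.
Variables (A B : PRing) (f : phom A B).

Definition glmap (x : glmat A) : glmat B := GLMat (gl_pair_map f (glP x)).

Lemma glmap1 : glmap (gl1 A) = gl1 B.
Proof. by apply: glmat_eq; apply: pmx1_map. Qed.

Lemma glmapM (x y z : glmat A) :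
  glmul x y = Some z -> glmul (glmap x) (glmap y) = Some (glmap z).
Proof. by move=> /glmul_Some [XZ YZ]; apply/glmul_Some; split; apply: is_mulmx_map. Qed.

Definition glmor : pgmor (GLpg A) (GLpg B) := @PGMor (GLpg A) (GLpg B) glmap glmap1 glmapM.

End Functoriality.

Lemma glmap_id (A : PRing) (x : glmat A) : glmap (phom_id A) x = x.
Proof. by apply: glmat_eq; apply: map_mx_id. Qed.

Lemma glmap_comp (A B C : PRing) (g : phom B C) (f : phom A B) (x : glmat A) :
  glmap (phom_comp g f) x = glmap g (glmap f x).
Proof. by apply: glmat_eq; apply: map_mx_comp. Qed.

Definition GLfun : PFunctor := @PFunctorPack GLpg glmor glmap_id glmap_comp.

(** * The representing partial ring *)

Lemma phom_eq (A B : PRing) (f g : phom A B) : f =1 g -> f = g.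
Proof.
move=> /functional_extensionality; case: f g => f f0 f1 fM fD [g g0 g1 gM gD] /= fg.
subst g; congr PHom; exact: proof_irrelevance.
Qed.

Definition glM (A : PRing) (x : glmat A) (b : bool) : 'M[A]_n := if b then glX x else glY x.

Lemma gl_pairM (A : PRing) (x : glmat A) b : gl_pair (glM x b) (glM x (~~ b)).
Proof. by case: b; [apply: glP | apply/gl_pair_sym/glP]. Qed.

Inductive term :=
  | T0 | T1 | Tvar of bool & 'I_n & 'I_n | Tadd of term & term | Tmul of term & term.

Fixpoint eval (A : PRing) (x : glmat A) (t : term) : option A :=
  match t with
  | T0 => Some (pr_zero A)
  | T1 => Some (pr_one A)
  | Tvar b i j => Some (glM x b i j)
  | Tadd t s => oadd (eval x t) (eval x s)
  | Tmul t s => omul (eval x t) (eval x s)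
  end.

Definition defined t := forall A (x : glmat A), eval x t <> None.

Definition term_eq t s := forall A (x : glmat A), eval x t = eval x s.

Lemma defined0 : defined T0. Proof. by []. Qed.

Lemma defined1 : defined T1. Proof. by []. Qed.

Lemma defined_var b i j : defined (Tvar b i j). Proof. by []. Qed.

Lemma defined_eval t (A : PRing) (x : glmat A) : defined t -> exists a, eval x t = Some a.
Proof. by move=> /(_ A x); case: (eval x t) => [a|] // _; exists a. Qed.

Lemma defined_addl t s : defined (Tadd t s) -> defined t.
Proof. by move=> D A x /= E; apply: (D A x); rewrite /= E. Qed.

Lemma defined_addr t s : defined (Tadd t s) -> defined s.
Proof. by move=> D A x /= E; apply: (D A x); rewrite /= E; case: (eval x t). Qed.

Lemma defined_mul t s : defined t -> defined s -> defined (Tmul t s).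
Proof.
by move=> Dt Ds A x /=; have [a ->] := defined_eval x Dt; have [b ->] := defined_eval x Ds.
Qed.

Lemma defined_mull t s : defined (Tmul t s) -> defined t.
Proof. by move=> D A x /= E; apply: (D A x); rewrite /= E. Qed.

Lemma defined_mulr t s : defined (Tmul t s) -> defined s.
Proof. by move=> D A x /= E; apply: (D A x); rewrite /= E; case: (eval x t). Qed.

Lemma defined_term_eq t s : term_eq t s -> defined t -> defined s.
Proof. by move=> ts Dt A x; rewrite -ts. Qed.

Lemma term_eq_add t t' s s' : term_eq t t' -> term_eq s s' -> term_eq (Tadd t s) (Tadd t' s').
Proof. by move=> tt' ss' A x /=; rewrite tt' ss'. Qed.

Lemma term_eq_mul t t' s s' : term_eq t t' -> term_eq s s' -> term_eq (Tmul t s) (Tmul t' s').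
Proof. by move=> tt' ss' A x /=; rewrite tt' ss'. Qed.

(* Undefined terms are sent to [T0] so that [cls] is total; only its values
   on defined terms matter. *)
Definition canon t := if excluded_middle_informative (defined t) then t else T0.

Lemma defined_canon t : defined (canon t).
Proof. by rewrite /canon; case: excluded_middle_informative. Qed.

Lemma canon_id t : defined t -> canon t = t.
Proof. by rewrite /canon; case: excluded_middle_informative. Qed.

(* The class of a defined term [t] is stored as the predicate [term_eq t]. *)
Record ogl := Ogl {
  ogl_class : term -> Prop;
  ogl_classP : exists2 t, defined t & ogl_class = term_eq t
}.

Lemma ogl_class_inj : injective ogl_class.
Proof.
case=> p P [q Q] /= pq; subst q.
by rewrite (proof_irrelevance _ P Q).
Qed.

Definition cls t : ogl := Ogl (ex_intro2 _ _ (canon t) (@defined_canon t) erefl).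

Lemma cls_eq t s : defined t -> defined s -> cls t = cls s <-> term_eq t s.
Proof.
move=> Dt Ds; split=> [/(congr1 ogl_class) /= | ts].
  by rewrite !canon_id // => -> A x.
apply: ogl_class_inj; rewrite /= !canon_id //.
apply: functional_extensionality => u; apply: propositional_extensionality.
by split=> tu A x; rewrite -tu ts.
Qed.

Lemma cls_term_eq t s : defined t -> term_eq t s -> cls t = cls s.
Proof. by move=> Dt ts; apply/(cls_eq Dt (defined_term_eq ts Dt)). Qed.

Lemma clsP (x : ogl) : exists t, defined t /\ x = cls t.
Proof.
case: x => p [t Dt pt]; exists t; split=> //.
by apply: ogl_class_inj; rewrite /= canon_id.
Qed.

Lemma cls_ind (P : ogl -> Prop) : (forall t, defined t -> P (cls t)) -> forall x, P x.
Proof. by move=> Pcls x; have [t [Dt ->]] := clsP x; apply: Pcls. Qed.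

Definition rep (x : ogl) : term := proj1_sig (constructive_indefinite_description _ (clsP x)).

Lemma rep_spec x : defined (rep x) /\ x = cls (rep x).
Proof. exact: proj2_sig (constructive_indefinite_description _ (clsP x)). Qed.

Lemma rep_cls t : defined t -> term_eq (rep (cls t)) t.
Proof. by move=> Dt; have [Drep /esym] := rep_spec (cls t); exact: (cls_eq Drep Dt).1. Qed.

Definition sem t : option ogl :=
  if excluded_middle_informative (defined t) then Some (cls t) else None.

Lemma sem_defined t : defined t -> sem t = Some (cls t).
Proof. by rewrite /sem; case: excluded_middle_informative. Qed.

Lemma sem_term_eq t s : term_eq t s -> sem t = sem s.
Proof.
move=> ts; rewrite /sem.
case: excluded_middle_informative => Dt; case: excluded_middle_informative => Ds //.
- by congr Some; apply/(cls_eq Dt Ds).2.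
- by case: Ds; apply: defined_term_eq Dt.
- by case: Dt; apply: defined_term_eq Ds => A x; rewrite ts.
Qed.

Definition ogl_add x y := sem (Tadd (rep x) (rep y)).

Definition ogl_mul x y := cls (Tmul (rep x) (rep y)).

Lemma ogl_addE t s : defined t -> defined s -> ogl_add (cls t) (cls s) = sem (Tadd t s).
Proof. by move=> Dt Ds; apply/sem_term_eq/term_eq_add; apply: rep_cls. Qed.

Lemma ogl_mulE t s : defined t -> defined s -> ogl_mul (cls t) (cls s) = cls (Tmul t s).
Proof.
move=> Dt Ds; have [Drt _] := rep_spec (cls t); have [Drs _] := rep_spec (cls s).
apply/(cls_eq (defined_mul Drt Drs) (defined_mul Dt Ds)).2.
by apply/term_eq_mul; apply: rep_cls.
Qed.

Lemma obind_ogl_addl t c : defined c ->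
  obind (ogl_add^~ (cls c)) (sem t) = sem (Tadd t c).
Proof.
move=> Dc; rewrite /sem; case: excluded_middle_informative => Dt /=.
  exact: ogl_addE.
by case: excluded_middle_informative => // D; case: Dt; apply: defined_addl D.
Qed.

Lemma obind_ogl_addr t a : defined a ->
  obind (ogl_add (cls a)) (sem t) = sem (Tadd a t).
Proof.
move=> Da; rewrite /sem; case: excluded_middle_informative => Dt /=.
  exact: ogl_addE.
by case: excluded_middle_informative => // D; case: Dt; apply: defined_addr D.
Qed.

Lemma ogl_add0x x : ogl_add (cls T0) x = Some x.
Proof.
elim/cls_ind: x => t Dt; rewrite ogl_addE // -(sem_defined Dt).
by apply: sem_term_eq => A x; apply: add0o.
Qed.

Lemma ogl_addC x y : ogl_add x y = ogl_add y x.
Proof.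
elim/cls_ind: x => t Dt; elim/cls_ind: y => s Ds; rewrite !ogl_addE //.
by apply: sem_term_eq => A x; apply: oaddC.
Qed.

Lemma ogl_addx0 x : ogl_add x (cls T0) = Some x.
Proof. by rewrite ogl_addC ogl_add0x. Qed.

Lemma ogl_addA x y z :
  obind (fun xy => ogl_add xy z) (ogl_add x y) = obind (fun yz => ogl_add x yz) (ogl_add y z).
Proof.
elim/cls_ind: x => a Da; elim/cls_ind: y => b Db; elim/cls_ind: z => c Dc.
rewrite !ogl_addE // obind_ogl_addl // obind_ogl_addr //.
by apply: sem_term_eq => A x; symmetry; apply: oaddA.
Qed.

Lemma ogl_mulC x y : ogl_mul x y = ogl_mul y x.
Proof.
elim/cls_ind: x => t Dt; elim/cls_ind: y => s Ds; rewrite !ogl_mulE //.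
by apply: cls_term_eq => [|A x]; [apply: defined_mul | apply: omulC].
Qed.

Lemma ogl_mulA x y z : ogl_mul x (ogl_mul y z) = ogl_mul (ogl_mul x y) z.
Proof.
elim/cls_ind: x => a Da; elim/cls_ind: y => b Db; elim/cls_ind: z => c Dc.
rewrite !ogl_mulE //; try exact: defined_mul.
by apply: cls_term_eq => [|A x]; [do !apply: defined_mul | apply: omulA].
Qed.

Lemma ogl_mul1x x : ogl_mul (cls T1) x = x.
Proof.
elim/cls_ind: x => t Dt; rewrite ogl_mulE //.
by apply: cls_term_eq => [|A x]; [apply: defined_mul | apply: mul1o].
Qed.

Lemma ogl_mul0x x : ogl_mul (cls T0) x = cls T0.
Proof.
elim/cls_ind: x => t Dt; rewrite ogl_mulE //.
apply: cls_term_eq => [|A x /=]; first exact: defined_mul.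
by have [a ->] := defined_eval x Dt; rewrite /= pr_mul0a.
Qed.

Lemma ogl_mulDl x1 x2 s y : ogl_add x1 x2 = Some s ->
  ogl_add (ogl_mul x1 y) (ogl_mul x2 y) = Some (ogl_mul s y).
Proof.
elim/cls_ind: x1 => t1 D1; elim/cls_ind: x2 => t2 D2; elim/cls_ind: y => u Du.
rewrite ogl_addE // /sem; case: excluded_middle_informative => // D12 [<-].
rewrite !ogl_mulE // ogl_addE; try exact: defined_mul.
rewrite -(sem_defined (defined_mul D12 Du)).
apply: sem_term_eq => A x; have [v] := defined_eval x D12.
have [a1 E1] := defined_eval x D1; have [a2 E2] := defined_eval x D2.
have [b Eb] := defined_eval x Du; rewrite /= E1 E2 Eb /= => a12.
by rewrite a12; apply: pr_mulDl.
Qed.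

Definition OGL : PRing := @PRingPack ogl (cls T0) (cls T1) ogl_add ogl_mul
  ogl_add0x ogl_addx0 ogl_addC ogl_addA ogl_mulC ogl_mulA ogl_mul1x ogl_mul0x ogl_mulDl.

Section EvalHom.
Variables (A : PRing) (x : glmat A).

Definition eval_fun (g : ogl) : A := odflt (pr_zero A) (eval x (rep g)).

Lemma eval_cls t : defined t -> eval x t = Some (eval_fun (cls t)).
Proof.
move=> Dt; rewrite /eval_fun (rep_cls Dt).
by have [a ->] := defined_eval x Dt.
Qed.

Lemma eval_fun0 : eval_fun (cls T0) = pr_zero A.
Proof. by have := eval_cls defined0 => -[]. Qed.

Lemma eval_fun1 : eval_fun (cls T1) = pr_one A.
Proof. by have := eval_cls defined1 => -[]. Qed.

Lemma eval_funM g g' : eval_fun (ogl_mul g g') = pr_mul (eval_fun g) (eval_fun g').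
Proof.
elim/cls_ind: g => t Dt; elim/cls_ind: g' => s Ds; rewrite ogl_mulE //.
by have := eval_cls (defined_mul Dt Ds); rewrite /= (eval_cls Dt) (eval_cls Ds) => -[].
Qed.

Lemma eval_funD g g' s : ogl_add g g' = Some s ->
  pr_add (eval_fun g) (eval_fun g') = Some (eval_fun s).
Proof.
elim/cls_ind: g => t Dt; elim/cls_ind: g' => t' Dt'.
rewrite ogl_addE // /sem; case: excluded_middle_informative => // Dtt' [<-].
by have := eval_cls Dtt'; rewrite /= (eval_cls Dt) (eval_cls Dt').
Qed.

Definition eval_phom : phom OGL A :=
  @PHom OGL A eval_fun eval_fun0 eval_fun1 eval_funM eval_funD.

Lemma eval_phom_var b i j : eval_phom (cls (Tvar b i j)) = glM x b i j.
Proof. by have := eval_cls (@defined_var b i j) => -[]. Qed.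

End EvalHom.

Definition gen_mx b : 'M[OGL]_n := \matrix_(i, j) cls (Tvar b i j).

Definition Tsum (f : 'I_n -> term) : term := \big[Tadd/T0]_j f j.

Lemma eval_Tsum (A : PRing) (x : glmat A) f :
  eval x (Tsum f) = \big[@oadd A/Some (pr_zero A)]_j eval x (f j).
Proof.
by rewrite /Tsum; elim: (index_enum _) => [|j r IH]; rewrite ?big_nil ?big_cons //= IH.
Qed.

Lemma osum_cls (f : 'I_n -> term) :
  (forall j, defined (f j)) -> osum (fun j => cls (f j) : OGL) = sem (Tsum f).
Proof.
move=> Df; rewrite /osum /Tsum; elim: (index_enum _) => [|j r IH].
  by rewrite !big_nil sem_defined.
by rewrite !big_cons IH; apply: obind_ogl_addr.
Qed.

Lemma osum_cls_defined (g : 'I_n -> OGL) (f : 'I_n -> term) (e : forall A, glmat A -> 'I_n -> A) :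
  (forall j, g j = cls (f j)) -> (forall A x j, eval x (f j) = Some (e A x j)) ->
  (forall A x, osum (e A x) <> None) -> osum g <> None.
Proof.
move=> gf fe e_sum.
have Df j : defined (f j) by move=> A x; rewrite fe.
have DTsum : defined (Tsum f).
  move=> A x; rewrite eval_Tsum.
  suff -> : \big[@oadd A/Some (pr_zero A)]_j eval x (f j) = osum (e A x) by apply: e_sum.
  by apply: eq_bigr => j _; apply: fe.
suff -> : osum g = sem (Tsum f) by rewrite sem_defined.
by rewrite -osum_cls //; apply: eq_bigr => j _; rewrite gf.
Qed.

Lemma is_mulmx_gen b : is_mulmx (gen_mx b) (gen_mx (~~ b)) (pmx1 OGL n).
Proof.
move=> i k; pose d := if i == k then T1 else T0.
have Dd : defined d by rewrite /d; case: (i == k).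
have -> : pmx1 OGL n i k = cls d by rewrite pmx1E /d; case: (i == k).
have -> : pmulmx (gen_mx b) (gen_mx (~~ b)) i k
          = sem (Tsum (fun j => Tmul (Tvar b i j) (Tvar (~~ b) j k))).
  rewrite -osum_cls => [|j]; last exact: defined_mul.
  by apply: eq_bigr => j _; rewrite !mxE /= ogl_mulE.
rewrite -(sem_defined Dd); apply: sem_term_eq => A x; rewrite eval_Tsum.
have [XY1 _ _ _] := gl_pairM x b.
transitivity (pmulmx (glM x b) (glM x (~~ b)) i k); first exact: eq_bigr.
by rewrite XY1 pmx1E /d; case: (i == k).
Qed.

Lemma lines_summable_gen b : lines_summable (gen_mx b).
Proof.
split=> i.
  apply: (@osum_cls_defined _ (fun j => Tvar b i j) (fun A x j => glM x b i j)) => // [j|A x].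
    by rewrite mxE.
  by have [_ _ [rows _] _] := gl_pairM x b.
apply: (@osum_cls_defined _ (fun j => Tvar b j i) (fun A x j => glM x b j i)) => // [j|A x].
  by rewrite !mxE.
have [_ _ [_ cols] _] := gl_pairM x b.
suff -> : osum (fun j => glM x b j i) = osum ((glM x b)^T i) by apply: cols.
by apply: eq_bigr => j _; rewrite mxE.
Qed.

Lemma gl_pair_gen : gl_pair (gen_mx true) (gen_mx false).
Proof.
split; [exact: (is_mulmx_gen true) | exact: (is_mulmx_gen false) | exact: lines_summable_gen..].
Qed.

Definition gl_of_hom (A : PRing) (h : phom OGL A) : glmat A := glmap h (GLMat gl_pair_gen).

Lemma hom_eval (A : PRing) (h : phom OGL A) t :
  defined t -> eval (gl_of_hom h) t = Some (h (cls t)).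
Proof.
elim: t => [||b i j|t IHt s IHs|t IHt s IHs] D /=.
- by rewrite -[cls T0]/(pr_zero OGL) phom0.
- by rewrite -[cls T1]/(pr_one OGL) phom1.
- by case: b {D}; rewrite !mxE.
- have Dt := defined_addl D; have Ds := defined_addr D.
  rewrite (IHt Dt) (IHs Ds) /=; apply: phomD.
  by rewrite /= ogl_addE // sem_defined.
- have Dt := defined_mull D; have Ds := defined_mulr D.
  by rewrite (IHt Dt) (IHs Ds) /= -phomM /= ogl_mulE.
Qed.

Lemma gl_of_hom_inj (A : PRing) : injective (@gl_of_hom A).
Proof.
move=> h1 h2 h12; apply: phom_eq; elim/cls_ind => t Dt.
by have := hom_eval h1 Dt; rewrite h12 hom_eval // => -[].
Qed.

Lemma eval_phomK (A : PRing) : cancel (@eval_phom A) (@gl_of_hom A).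
Proof.
move=> x; apply: glX_inj; apply/matrixP => i j.
by rewrite -[glX _]/(map_mx _ (gen_mx true)) !mxE eval_phom_var.
Qed.

Lemma gl_of_homK (A : PRing) : cancel (@gl_of_hom A) (@eval_phom A).
Proof. by move=> h; apply: gl_of_hom_inj; rewrite eval_phomK. Qed.

Lemma eval_phom_map (A B : PRing) (f : phom A B) (x : glmat A) :
  eval_phom (glmap f x) = phom_comp f (eval_phom x).
Proof.
apply: gl_of_hom_inj; rewrite eval_phomK.
by rewrite /gl_of_hom glmap_comp -/(gl_of_hom _) eval_phomK.
Qed.

Lemma GLfun_representable : representable GLfun.
Proof.
exists OGL, (fun A (x : glmat A) => eval_phom x); split.
  by move=> A; exists (@gl_of_hom A); [apply: eval_phomK | apply: gl_of_homK].
move=> A B f x g; change (eval_phom (glmap f x) g = f (eval_phom x g)).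
by rewrite eval_phom_map.
Qed.

End GLn.

(** * Commutative rings and F_1 *)

Section ComRing.
Variables (R : comPzRingType) (n : nat).
Local Notation A := (comring_pring R).
Implicit Types X Y Z : 'M[A]_n.

Lemma osum_comring (I : finType) (f : I -> A) : osum f = Some (\sum_i (f i : R)).
Proof. by apply: (big_ind2 (fun (u : option A) (v : R) => u = Some v)) => // _ a _ b -> ->. Qed.

Lemma is_mulmx_comring X Y Z : is_mulmx X Y Z <-> X *m Y = Z.
Proof.
have XYE i k : pmulmx X Y i k = Some ((X *m Y) i k) by rewrite /pmulmx osum_comring mxE.
split=> [XYZ|<- i k //]; apply/matrixP => i k.
by have := XYZ i k; rewrite XYE => -[].
Qed.

Lemma pmx1_comring : pmx1 A n = 1%:M.
Proof. by apply/matrixP => i j; rewrite pmx1E mxE; case: (i == j). Qed.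

Lemma gl_pair_comring X Y : gl_pair X Y <-> X *m Y = 1%:M /\ Y *m X = 1%:M.
Proof.
rewrite -pmx1_comring; split=> [[/is_mulmx_comring XY1 /is_mulmx_comring YX1 _ _] // | [XY1 YX1]].
have lines Z : lines_summable Z by split=> i; rewrite osum_comring.
by split; rewrite ?lines //; apply/is_mulmx_comring.
Qed.

Lemma GLfun_comring : exists phi : GLfun n A -> 'M[R]_n,
  injective phi /\
  (forall x, invertible_mx (phi x)) /\
  (forall M : 'M[R]_n, invertible_mx M -> exists x, phi x = M) /\
  phi (pg_one (GLfun n A)) = 1%:M /\
  (forall x y, exists z, pg_mul x y = Some z /\ phi z = phi x *m phi y).
Proof.
exists (@glX n A); split; [exact: glX_inj | split; [|split; [|split]]].
- by move=> x; exists (glY x); apply/gl_pair_comring/glP.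
- by move=> M [N /gl_pair_comring MN]; exists (GLMat MN).
- exact: pmx1_comring.
move=> x y; have [XY1 YX1] := (gl_pair_comring _ _).1 (glP x).
have [XY1' YX1'] := (gl_pair_comring _ _).1 (glP y).
have P : @gl_pair A n (glX x *m glX y) (glY y *m glY x).
  apply/gl_pair_comring; rewrite !mulmxA -(mulmxA (glX x)) -(mulmxA (glY y)).
  by rewrite XY1' YX1 !mulmx1.
by exists (GLMat P); split=> //; apply/glmul_Some; split; apply/is_mulmx_comring.
Qed.

End ComRing.

Section F1Permutations.
Variable n : nat.
Local Open Scope group_scope.

Lemma osum_F1_true (I : finType) (f : I -> F1) b i : osum f = Some b -> f i -> b.
Proof.
rewrite /osum (bigD1 i) //= => + fi; rewrite fi.
by case: (\big[_/_]_(j | _) _) => [[]|] //= [<-].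
Qed.

Lemma osum_F1_false (I : finType) (f : I -> F1) : (forall i, ~~ f i) -> osum f = Some false.
Proof. by move=> f0; rewrite /osum big1 // => i _; rewrite (negbTE (f0 i)). Qed.

Lemma pmx1_F1 i j : pmx1 F1 n i j = (i == j).
Proof. by rewrite pmx1E; case: (i == j). Qed.

Definition pmx (s : 'S_n) : 'M[F1]_n := \matrix_(i, j) (j == s i).

Lemma pmx_inj : injective pmx.
Proof.
move=> s t st; apply/permP => i.
by have := congr1 (fun M : 'M_n => M i (s i)) st; rewrite /= !mxE eqxx => /esym/eqP.
Qed.

Lemma pmx1_perm : pmx 1 = pmx1 F1 n.
Proof. by apply/matrixP => i j; rewrite mxE pmx1_F1 perm1 eq_sym. Qed.

Lemma pmx_mul s t : is_mulmx (pmx s) (pmx t) (pmx (s * t)).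
Proof.
move=> i k; rewrite /pmulmx (osum_single (i0 := s i)) /= ?mxE ?eqxx ?permM // => j.
by rewrite mxE => /negbTE ->.
Qed.

Lemma pmx_tr s : (pmx s)^T = pmx s^-1.
Proof.
apply/matrixP => i j; rewrite !mxE.
by apply/eqP/eqP => [->|->]; rewrite ?permK ?permKV.
Qed.

Lemma rows_summable_pmx s : rows_summable (pmx s).
Proof. by move=> i; rewrite (osum_single (i0 := s i)) // => j; rewrite mxE => /negbTE ->. Qed.

Lemma gl_pair_pmx s : gl_pair (pmx s) (pmx s^-1).
Proof.
have lines t : lines_summable (pmx t) by split; rewrite ?pmx_tr; apply: rows_summable_pmx.
split; rewrite // -pmx1_perm.
  by have := pmx_mul s s^-1; rewrite mulgV.
by have := pmx_mul s^-1 s; rewrite mulVg.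
Qed.

Section GLperm.
Variable x : glmat n F1.

Lemma glX_glY_diag i j k : glX x i j -> glY x j k -> i = k.
Proof.
case: (glP x) => XY1 _ _ _ Xij Yjk.
by have := osum_F1_true (i := j) (XY1 i k); rewrite /= Xij Yjk pmx1_F1 => /(_ isT) /eqP.
Qed.

Definition glperm_fun i := odflt i [pick j | glX x i j && glY x j i].

Lemma glperm_funP i : glX x i (glperm_fun i) && glY x (glperm_fun i) i.
Proof.
rewrite /glperm_fun; case: pickP => [j //|none].
case: (glP x) => XY1 _ _ _; have := XY1 i i.
by rewrite /pmulmx osum_F1_false ?pmx1_F1 ?eqxx // => j; rewrite /= none.
Qed.

Lemma glperm_fun_inj : injective glperm_fun.
Proof.
move=> i k ik; have /andP [Xi _] := glperm_funP i; have /andP [_ Yk] := glperm_funP k.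
by apply: glX_glY_diag Xi _; rewrite ik.
Qed.

Definition glperm : 'S_n := perm glperm_fun_inj.

Lemma glX_perm : glX x = pmx glperm.
Proof.
have glperm_funV j : glperm_fun (glperm^-1 j) = j by have := permKV glperm j; rewrite permE.
apply/matrixP => i j; rewrite mxE permE; apply/idP/eqP => [Xij|->].
  have /andP [_] := glperm_funP (glperm^-1 j).
  by rewrite glperm_funV => /(glX_glY_diag Xij) ->.
by case/andP: (glperm_funP i).
Qed.

Lemma glY_perm : glY x = pmx glperm^-1.
Proof.
case: (glP x) => _ YX1 _ _; case: (gl_pair_pmx glperm) => XY1 _ _ _.
by apply: mulmx1_inj YX1 _; rewrite glX_perm.
Qed.

End GLperm.

Lemma GLfun_F1 : exists phi : GLfun n F1 -> 'S_n,
  bijective phi /\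
  phi (pg_one (GLfun n F1)) = 1 /\
  (forall x y, exists z, pg_mul x y = Some z /\ phi z = phi x * phi y).
Proof.
pose psi s : glmat n F1 := GLMat (gl_pair_pmx s).
have glpermK : cancel psi glperm by move=> s; apply/pmx_inj; rewrite -glX_perm.
exists glperm; split; [|split].
- exists psi => // x; apply: glX_inj; exact/esym/glX_perm.
- by apply/pmx_inj; rewrite -glX_perm pmx1_perm.
move=> x y; exists (psi (glperm x * glperm y)%g); split=> //.
apply/glmul_Some; split; rewrite /= ?glX_perm ?glY_perm ?invMg; exact: pmx_mul.
Qed.

End F1Permutations.

Theorem mainTheorem1 (n : nat) (hn : (0 < n)%N) :
  exists GL : PFunctor,
    representable GL /\
    (* (1) good partial rings give groups *)
    (forall A : PRing, good A -> is_group (GL A)) /\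
    (* (2) commutative rings: GL_n(A) is the group of invertible matrices *)
    (forall R : comPzRingType,
       exists phi : GL (comring_pring R) -> 'M[R]_n,
         injective phi /\
         (forall x, invertible_mx (phi x)) /\
         (forall M : 'M[R]_n, invertible_mx M -> exists x, phi x = M) /\
         phi (pg_one (GL (comring_pring R))) = 1%:M%R /\
         (forall x y, exists z, pg_mul x y = Some z /\ phi z = (phi x *m phi y)%R)) /\
    (* (3) GL_n(F_1) is the symmetric group S_n *)
    (exists phi : GL F1 -> 'S_n,
       bijective phi /\
       phi (pg_one (GL F1)) = 1%g /\
       (forall x y, exists z, pg_mul x y = Some z /\ phi z = (phi x * phi y)%g)).
Proof.
exists (GLfun n); split; first exact: GLfun_representable.
split; first exact: GLpg_group.
split; first by move=> R; apply: GLfun_comring.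
exact: GLfun_F1.
Qed.
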